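(* Let $X_1,X_2$ be finite CW-complexes, let $\phi:X_1\to X_2$ be a homotopy equivalence, let $\xi_2\in H^1(X_2;\mathbb{R})$ and $\xi_1=\phi^*(\xi_2)\in H^1(X_1;\mathbb{R})$. Then $\mathrm{cat}(X_1,\xi_1)=\mathrm{cat}(X_2,\xi_2)$.
   Context: Continuous closed 1-forms on a space $X$: a collection $\{f_U\}_{U\in\mathcal U}$ of continuous functions $f_U:U\to\mathbb{R}$ on the sets of an open cover $\mathcal U$ of $X$ such that each $f_U-f_V$ is locally constant on $U\cap V$. For a path $\gamma:[0,1]\to X$, $\int_\gamma\omega=\sum_{i}[f_{U_i}(\gamma(t_{i+1}))-f_{U_i}(\gamma(t_i))]$ for a subdivision $0=t_0<\dots<t_N=1$ with $\gamma[t_i,t_{i+1}]\subset U_i\in\mathcal U$. Each such form has a cohomology class in $H^1(X;\mathbb{R})$ given by its periods on loops, and every class of a finite CW-complex is realized. For a finite CW-complex $X$ and $\xi\in H^1(X;\mathbb{R})$, fix a continuous closed 1-form $\omega$ representing $\xi$. $\mathrm{cat}(X,\xi)$ is the least integer $k\ge0$ such that for every integer $N>0$ there is an open cover $X=F\cup F_1\cup\dots\cup F_k$ with: (a) each inclusion $F_j\to X$, $j=1,\dots,k$, is null-homotopic; (b) there is a homotopy $h_t:F\to X$, $t\in[0,1]$, with $h_0$ the inclusion and $\int_{\gamma_x}\omega\le -N$ for all $x\in F$, where $\gamma_x(t)=h_t(x)$. It is independent of the choice of $\omega$ in the class $\xi$. *)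

From HB Require Import structures.
From mathcomp Require Import all_boot all_order all_algebra.
From mathcomp Require Import all_classical all_reals all_analysis.
Set Implicit Arguments. Unset Strict Implicit. Unset Printing Implicit Defensive.
Import Order.TTheory GRing.Theory Num.Theory.
Import numFieldNormedType.Exports.
Local Open Scope classical_set_scope.
Local Open Scope ring_scope.

Section Defs.
Variable R : realType.

Definition unitI : set R := [set t | 0 <= t <= 1].

Definition sqnorm n (v : 'rV[R]_n) : R := \sum_(i < n) (v ord0 i) ^+ 2.
Definition disk n : set 'rV[R]_n := [set v | sqnorm v <= 1].
Definition odisk n : set 'rV[R]_n := [set v | sqnorm v < 1].
Definition sphere n : set 'rV[R]_n := [set v | sqnorm v = 1].

Definition finite_CW_structure (X : topologicalType) (k : nat)
    (dim : 'I_k -> nat) (Phi : forall i : 'I_k, 'rV[R]_(dim i) -> X) : Prop :=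
  let ocell i := Phi i @` @odisk (dim i) in
  hausdorff_space X /\
  [/\
      (forall i, {within @disk (dim i), continuous (Phi i)}),
      (* restricted to the open disk, Phi i is a homeomorphism onto the open cell *)
      (forall i, forall u v, @odisk (dim i) u -> @odisk (dim i) v ->
         Phi i u = Phi i v -> u = v) &
      (forall i (U : set 'rV[R]_(dim i)), open U ->
         exists V : set X, open V /\
           Phi i @` (U `&` @odisk (dim i)) = V `&` ocell i)] /\
  [/\
      (forall x : X, exists i, ocell i x /\ forall j, ocell j x -> j = i),
      (forall i v, @sphere (dim i) v ->
         exists j, (dim j < dim i)%N /\ ocell j (Phi i v)) &
      (forall A : set X,
         (forall i, closed (@disk (dim i) `&` Phi i @^-1` A)) -> closed A)].

Definition finite_CW_complex (X : topologicalType) : Prop :=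
  exists k (dim : 'I_k -> nat) (Phi : forall i : 'I_k, 'rV[R]_(dim i) -> X),
    @finite_CW_structure X k dim Phi.

Definition homotopic (X Y : topologicalType) (f g : X -> Y) : Prop :=
  exists H : X -> R -> Y,
    [/\ {within [set p : X * R | unitI p.2], continuous (fun p => H p.1 p.2)},
        (forall x, H x 0 = f x) & (forall x, H x 1 = g x)].

Definition homotopy_equivalence (X Y : topologicalType) (phi : X -> Y) : Prop :=
  continuous phi /\
  exists psi : Y -> X, [/\ continuous psi,
    homotopic (psi \o phi) id & homotopic (phi \o psi) id].

(** Continuous closed 1-forms: functions f_U on the sets U of an open cover,
    with f_U - f_V locally constant on U /\ V. *)
Record closed_form (X : topologicalType) := ClosedForm {
  cf_idx : Type;
  cf_U : cf_idx -> set X;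
  cf_f : cf_idx -> X -> R;
  cf_open : forall a, open (cf_U a);
  cf_cover : forall x, exists a, cf_U a x;
  cf_cont : forall a, {within cf_U a, continuous (cf_f a)};
  cf_locconst : forall a b x, cf_U a x -> cf_U b x ->
    exists N : set X, nbhs x N /\
      forall y, N y -> cf_U a y -> cf_U b y ->
        cf_f a y - cf_f b y = cf_f a x - cf_f b x
}.
Arguments cf_U {X} c _.
Arguments cf_f {X} c _ _.

(** [v] is the value of the integral of [w] along the path [g : [0,1] -> X]
    computed with some admissible subdivision 0 = t_0 < ... < t_N = 1. *)
Definition integral_value (X : topologicalType) (w : closed_form X)
    (g : R -> X) (v : R) : Prop :=
  exists (N : nat) (t : nat -> R) (a : nat -> cf_idx w),
    [/\ t 0%N = 0, t N = 1,
        (forall j, (j < N)%N -> t j < t j.+1),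
        (forall j, (j < N)%N -> forall s, t j <= s <= t j.+1 ->
           cf_U w (a j) (g s)) &
        v = \sum_(j < N) (cf_f w (a j) (g (t j.+1)) - cf_f w (a j) (g (t j)))].

(** the integral of w along g (well defined for continuous paths) *)
Definition path_integral (X : topologicalType) (w : closed_form X)
    (g : R -> X) : R := xget 0 [set v | integral_value w g v].

Definition is_path (X : topologicalType) (g : R -> X) : Prop :=
  {within unitI, continuous g}.

Definition is_loop (X : topologicalType) (g : R -> X) : Prop :=
  is_path g /\ g 0 = g 1.

(** the condition defining cat(X, xi) <= k, for w representing xi *)
Definition cat_cover_prop (X : topologicalType) (w : closed_form X) (k : nat)
  : Prop :=
  forall N : nat, (0 < N)%N ->
    exists (F : set X) (Fs : 'I_k -> set X),
      [/\ open F, (forall j, open (Fs j)),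
          (forall x, F x \/ exists j, Fs j x),
          (* (a) each inclusion F_j -> X is null-homotopic *)
          (forall j, exists (H : X -> R -> X) (c : X),
             [/\ {within [set p : X * R | Fs j p.1 /\ unitI p.2],
                   continuous (fun p => H p.1 p.2)},
                 (forall x, Fs j x -> H x 0 = x) &
                 (forall x, Fs j x -> H x 1 = c)]) &
          (exists h : X -> R -> X,
             [/\ {within [set p : X * R | F p.1 /\ unitI p.2],
                   continuous (fun p => h p.1 p.2)},
                 (forall x, F x -> h x 0 = x) &
                 (forall x, F x -> path_integral w (h x) <= - N%:R)])].

(** cat(X, xi) computed from a representative w of xi: least such k *)
Definition cat_xi (X : topologicalType) (w : closed_form X) : nat :=
  xget 0%N [set k | cat_cover_prop w k /\
                    forall m, cat_cover_prop w m -> (k <= m)%N].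

End Defs.

(* The integral of a continuous closed 1-form along continuous paths does not
   depend on the admissible subdivision, is additive under concatenation and
   invariant under homotopies of loops.  If f : X -> Y preserves the integrals
   on loops and X is a finite CW-complex, the defect
   J g = int_(f o g) w_Y - int_g w_X is additive and vanishes on loops, hence
   depends only on the endpoints of g; joining these to the centres of the
   finitely many cells by radial paths, whose integrals are bounded by
   compactness, shows that J is bounded above by some C.
   Now let psi be a homotopy inverse of phi.  Given a cover of X2 witnessing
   cat(X2, xi2) <= k at a level N', deform the preimage of its deformable set
   under phi first along a homotopy from id to psi o phi (integral bounded by
   compactness of X1) and then along psi applied to the deformation in X2
   (integral at most -N' + C, as psi preserves the integrals on loops because
   phi does and phi o psi is homotopic to id); for N' large this gives any
   level N.  Hence cat(X1, xi1) <= cat(X2, xi2), and symmetrically. *)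

From HB Require Import structures.
From mathcomp Require Import all_boot all_order all_algebra.
From mathcomp Require Import all_classical all_reals all_analysis.
From mathcomp Require Import ring lra.
Import Order.TTheory GRing.Theory Num.Theory.
Import numFieldNormedType.Exports.
Local Open Scope classical_set_scope.
Local Open Scope ring_scope.
Set Implicit Arguments. Unset Strict Implicit. Unset Printing Implicit Defensive.

Definition continuous_on (T U : topologicalType) (A : set T) (f : T -> U) :=
  forall x, A x -> forall W, nbhs (f x) W -> nbhs x [set y | A y -> W (f y)].

Lemma continuous_onP (T U : topologicalType) (A : set T) (f : T -> U) :
  {within A, continuous f} <-> continuous_on A f.
Proof. by rewrite subspace_continuousP; split=> h x Ax W fW; exact: h. Qed.

Lemma continuous_on_comp (S T U : topologicalType) (B : set S) (A : set T)
    (g : S -> T) (f : T -> U) :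
  continuous_on B g -> continuous_on A f -> (forall x, B x -> A (g x)) ->
  continuous_on B (f \o g).
Proof.
move=> cg cf BA x Bx W fW.
apply: filterS (cg x Bx _ (cf (g x) (BA x Bx) W fW)) => y h By.
exact: h By (BA y By).
Qed.

Lemma continuous_continuous_on (T U : topologicalType) (A : set T) (f : T -> U) :
  continuous f -> continuous_on A f.
Proof.
move=> cf x _ W fW; have nW : nbhs x (f @^-1` W) := cf x W fW.
by apply: filterS nW => y h _.
Qed.

Lemma continuous_on_subset (T U : topologicalType) (A B : set T) (f : T -> U) :
  A `<=` B -> continuous_on B f -> continuous_on A f.
Proof.
move=> AB cf x Ax W fW; apply: filterS (cf x (AB x Ax) W fW) => y h Ay.
exact: h (AB y Ay).
Qed.

Lemma continuous_on_pair (T U V : topologicalType) (A : set T)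
    (f : T -> U) (g : T -> V) :
  continuous_on A f -> continuous_on A g ->
  continuous_on A (fun x => (f x, g x)).
Proof.
move=> cf cg x Ax W [[P Q] [/= nP nQ] PQW].
apply: filterS (filterI (cf x Ax P nP) (cg x Ax Q nQ)) => y [fP gQ] Ay.
exact: PQW (f y, g y) (conj (fP Ay) (gQ Ay)).
Qed.

Lemma fst_continuous (T U : topologicalType) : continuous (@fst T U).
Proof. by move=> p; apply: cvg_fst. Qed.

Lemma snd_continuous (T U : topologicalType) : continuous (@snd T U).
Proof. by move=> p; apply: cvg_snd. Qed.

Lemma nbhs_prod (T U : topologicalType) (x : T) (y : U) (A : set T) (B : set U) :
  nbhs x A -> nbhs y B -> nbhs (x, y) [set p | A p.1 /\ B p.2].
Proof. by move=> nA nB; exists (A, B). Qed.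

Section RealLine.
Variable R : realType.

Lemma nbhsRP (x : R) (P : set R) :
  nbhs x P <-> exists2 d : R, 0 < d & forall y, `|y - x| < d -> P y.
Proof.
split=> [/nbhs_ballP [d d0 hd]|[d d0 hd]]; exists d => // y hy; apply: hd.
  by rewrite /ball /= distrC.
by move: hy; rewrite /ball /= distrC.
Qed.

Lemma steps_le (t : nat -> R) N : (forall j, (j < N)%N -> t j < t j.+1) ->
  forall i j, (i <= j)%N -> (j <= N)%N -> t i <= t j.
Proof.
move=> ht i j ij; elim: j ij => [|j IH]; first by rewrite leqn0 => /eqP ->.
rewrite leq_eqVlt => /orP[/eqP -> //|ij] jN.
exact: le_trans (IH ij (ltnW jN)) (ltW (ht j jN)).
Qed.

Lemma locally_constant_itv (f : R -> R) (al be : R) : al <= be ->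
  (forall s, al <= s <= be -> exists2 d : R, 0 < d &
     forall s', al <= s' <= be -> `|s' - s| < d -> f s' = f s) ->
  f be = f al.
Proof.
move=> albe hloc.
pose A := [set T : R | al <= T <= be /\ forall r, al <= r <= T -> f r = f al].
have A_al : A al.
  split=> [|r /andP[h1 h2]]; first by rewrite lexx albe.
  by have -> : r = al by apply/eqP; rewrite eq_le h1 h2.
have supA : has_sup A by split; [exists al | exists be => T [/andP[_ ->]]].
pose m := sup A.
have alm : al <= m by apply: sup_upper_bound.
have mbe : m <= be by apply: ge_sup; [exists al | move=> T [/andP[_ ->]]].
have [d d0 hd] := hloc m (introT andP (conj alm mbe)).
have [T [/andP[alT Tbe] AT] mT] := sup_adherent d0 supA.
rewrite -/m in mT.
have Tm : T <= m by apply: sup_upper_bound => //; split; [rewrite alT Tbe|].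
have fTm : f T = f m.
  by apply: hd; [rewrite alT Tbe | rewrite ltr_norml; apply/andP; split; lra].
have A_up T' : al <= T' <= be -> T' <= m + d / 2 -> A T'.
  move=> /andP[h1 h2] h3; split=> [|r /andP[alr rT']]; first by rewrite h1 h2.
  have [rT|Tr] := leP r T; first by apply: AT; rewrite alr rT.
  rewrite -(AT T) ?alT ?lexx // fTm; apply: hd; first by apply/andP; split; lra.
  by rewrite ltr_norml; apply/andP; split; lra.
have [hle|hlt] := leP (m + d / 2) be.
  have /(sup_upper_bound supA) : A (m + d / 2) by apply: A_up; rewrite ?hle; lra.
  rewrite -/m; lra.
have [_] : A be by apply: A_up; [rewrite albe lexx | lra].
by apply; rewrite albe lexx.
Qed.

End RealLine.

(** * Subdivisions and the path integral *)

Section Subdivision.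
Variables (R : realType) (X : topologicalType) (w : closed_form R X).

Definition admissible (g : R -> X) N (t : nat -> R) (a : nat -> cf_idx w) :=
  [/\ t 0%N = 0, t N = 1, (forall j, (j < N)%N -> t j < t j.+1) &
      (forall j, (j < N)%N -> forall s, t j <= s <= t j.+1 -> cf_U (a j) (g s))].

Definition subdivision_sum (g : R -> X) N (t : nat -> R) (a : nat -> cf_idx w) :=
  \sum_(j < N) (cf_f (a j) (g (t j.+1)) - cf_f (a j) (g (t j))).

Lemma integral_valueE g v : integral_value w g v <->
  exists N t a, admissible g N t a /\ v = subdivision_sum g N t a.
Proof.
split; first by move=> [N [t [a [? ? ? ? ?]]]]; exists N, t, a.
by move=> [N [t [a [[? ? ? ?] ?]]]]; exists N, t, a.
Qed.

Lemma admissible_gt0 g N t a : admissible g N t a -> (0 < N)%N.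
Proof.
case=> t0 tN _ _; case: N tN => // tN; move: tN; rewrite t0 => /eqP.
by rewrite eq_sym oner_eq0.
Qed.

Lemma admissible_unitI g N t a : admissible g N t a ->
  forall j, (j <= N)%N -> unitI (t j).
Proof.
move=> [t0 tN tinc _] j jN; apply/andP; split.
  by rewrite -t0; apply: (steps_le tinc).
by rewrite -tN; apply: (steps_le tinc).
Qed.

Definition clamp (lo hi s : R) := if s <= lo then lo else if s <= hi then s else hi.

Lemma clamp_lo lo hi s : s <= lo -> clamp lo hi s = lo.
Proof. by rewrite /clamp => ->. Qed.

Lemma clamp_id lo hi s : lo <= s <= hi -> clamp lo hi s = s.
Proof.
rewrite /clamp => /andP[h1 h2]; rewrite h2.
by case: ifP => // h; apply/eqP; rewrite eq_le h h1.
Qed.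

Lemma clamp_hi lo hi s : lo <= hi -> hi <= s -> clamp lo hi s = hi.
Proof.
rewrite /clamp => h1 h2; case: ifP => h3.
  by apply/eqP; rewrite eq_le h1 (le_trans h2 h3).
by case: ifP => // h4; apply/eqP; rewrite eq_le h4 h2.
Qed.

(* The integral along [g] restricted to [[0, s]]: a primitive of the form
   along [g], which makes the sum independent of the subdivision. *)
Definition running_sum (g : R -> X) N (t : nat -> R) (a : nat -> cf_idx w) (s : R) :=
  \sum_(j < N) (cf_f (a j) (g (clamp (t j) (t j.+1) s)) - cf_f (a j) (g (t j))).

Lemma running_sum_seg g N t a K s s' : admissible g N t a -> (K < N)%N ->
  t K <= s <= t K.+1 -> t K <= s' <= t K.+1 ->
  running_sum g N t a s' - running_sum g N t a s =
  cf_f (a K) (g s') - cf_f (a K) (g s).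
Proof.
move=> [_ _ tinc _] KN /andP[s1 s2] /andP[s1' s2'].
rewrite /running_sum -sumrB (bigD1 (Ordinal KN)) //= big1 ?addr0.
  by rewrite !clamp_id ?s1 ?s2 ?s1' ?s2' //; ring.
move=> j /eqP jK; have {}jK : nat_of_ord j <> K by move=> e; apply/jK/val_inj.
case: (ltngtP j K) => [jlt|jgt|//].
  have h : t j.+1 <= t K by apply: (steps_le tinc) => //; exact: ltnW.
  have hj : t j <= t j.+1 by apply/ltW/tinc/(ltn_trans jlt KN).
  by rewrite !(@clamp_hi (t j) (t j.+1)) ?(le_trans h) //; ring.
have h : t K.+1 <= t j by apply: (steps_le tinc) => //; apply: ltnW.
by rewrite !(@clamp_lo (t j) (t j.+1)) ?(le_trans _ h) //; ring.
Qed.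

Lemma running_sum0 g N t a : admissible g N t a -> running_sum g N t a 0 = 0.
Proof.
move=> ha; rewrite /running_sum big1 // => j _.
have /andP[h _] := admissible_unitI ha (ltnW (ltn_ord j)).
by rewrite clamp_lo // subrr.
Qed.

Lemma running_sum1 g N t a : admissible g N t a ->
  running_sum g N t a 1 = subdivision_sum g N t a.
Proof.
move=> ha; apply: eq_bigr => j _; have [_ _ tinc _] := ha.
have /andP[_ h] := admissible_unitI ha (ltn_ord j).
by rewrite clamp_hi //; apply/ltW/tinc.
Qed.

Lemma subdivision_sum_primitive g N t a (psi : R -> R) : admissible g N t a ->
  (forall K, (K < N)%N -> forall s, t K <= s <= t K.+1 ->
     psi s - cf_f (a K) (g s) = psi (t K) - cf_f (a K) (g (t K))) ->
  subdivision_sum g N t a = psi 1 - psi 0.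
Proof.
move=> [t0 tN tinc _] hpsi.
have -> : subdivision_sum g N t a = \sum_(j < N) (psi (t j.+1) - psi (t j)).
  apply: eq_bigr => j _.
  have := hpsi j (ltn_ord j) (t j.+1); rewrite lexx andbT.
  by move=> /(_ (ltW (tinc j (ltn_ord j)))); lra.
rewrite -(big_mkord xpredT (fun j => psi (t j.+1) - psi (t j))).
by rewrite (telescope_sumr (fun j => psi (t j))) // t0 tN.
Qed.

Lemma segment_right_of g N t a s0 : admissible g N t a -> unitI s0 ->
  exists2 K, (K < N)%N & exists2 e : R, 0 < e & forall s', s' <= 1 ->
    s0 <= s' -> s' - s0 < e -> t K <= s' <= t K.+1.
Proof.
move=> ha /andP[s00 s01]; have N0 := admissible_gt0 ha.
have [t0 tN tinc _] := ha.
have [s0lt|s0ge] := ltP s0 1; last first.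
  exists N.-1; first by rewrite prednK.
  exists 1 => // s' s'1 s0s' _; rewrite prednK // tN s'1 andbT.
  by apply: le_trans (le_trans s0ge s0s'); rewrite -tN (steps_le tinc) ?leq_pred.
have exP : exists j, s0 < t j by exists N; rewrite tN.
case: (ex_minnP exP) => J PJ Jmin.
have JN : (J <= N)%N by apply: Jmin; rewrite tN.
have J0 : (0 < J)%N by case: J PJ {Jmin JN} => //; rewrite t0; lra.
exists J.-1; first by rewrite (leq_trans _ JN) // prednK.
exists (t J - s0) => [|s' _ s0s' hs']; first by rewrite subr_gt0.
have tK : t J.-1 <= s0.
  by rewrite leNgt; apply/negP => /Jmin; rewrite -ltnS prednK // ltnn.
by rewrite prednK // (le_trans tK s0s'); apply: ltW; lra.
Qed.

Lemma segment_left_of g N t a s0 : admissible g N t a -> unitI s0 ->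
  exists2 K, (K < N)%N & exists2 e : R, 0 < e & forall s', 0 <= s' ->
    s' <= s0 -> s0 - s' < e -> t K <= s' <= t K.+1.
Proof.
move=> ha /andP[s00 s01]; have N0 := admissible_gt0 ha.
have [t0 tN tinc _] := ha.
have [s0gt|s0le] := ltP 0 s0; last first.
  exists 0%N => //; exists 1 => // s' s'0 s's0 _; rewrite t0 s'0 /=.
  by apply: le_trans (le_trans s's0 s0le) _; rewrite -t0 ltW ?tinc.
have exP : exists j, s0 <= t j by exists N; rewrite tN.
case: (ex_minnP exP) => J PJ Jmin.
have JN : (J <= N)%N by apply: Jmin; rewrite tN.
have J0 : (0 < J)%N by case: J PJ {Jmin JN} => //; rewrite t0; lra.
exists J.-1; first by rewrite (leq_trans _ JN) // prednK.
have tK : t J.-1 < s0.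
  by rewrite ltNge; apply/negP => /Jmin; rewrite -ltnS prednK // ltnn.
exists (s0 - t J.-1) => [|s' _ s's0 hs']; first by rewrite subr_gt0.
by rewrite prednK // (le_trans s's0 PJ) andbT; apply: ltW; lra.
Qed.

Lemma running_sum_local_seg g N t a K s0 (b : cf_idx w) :
  continuous_on (@unitI R) g -> admissible g N t a -> (K < N)%N ->
  t K <= s0 <= t K.+1 -> cf_U b (g s0) ->
  exists2 d : R, 0 < d & forall s', t K <= s' <= t K.+1 -> cf_U b (g s') ->
    `|s' - s0| < d ->
    running_sum g N t a s' - cf_f b (g s') = running_sum g N t a s0 - cf_f b (g s0).
Proof.
move=> gc ha KN hs0 Ub.
have hseg := admissible_unitI ha.
have segI s : t K <= s <= t K.+1 -> unitI s.
  case/andP: (hseg _ (ltnW KN)) (hseg _ KN) => h0 _ /andP[_ h1] /andP[hs hs'].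
  by apply/andP; split; [exact: le_trans h0 hs | exact: le_trans hs' h1].
have [_ _ _ tcov] := ha.
have [Nb [nN hN]] := cf_locconst (tcov K KN s0 hs0) Ub.
have /nbhsRP[d d0 hd] := gc s0 (segI s0 hs0) Nb nN.
exists d => // s' hs' Ub' hs'd.
have := hN (g s') (hd s' hs'd (segI s' hs')) (tcov K KN s' hs') Ub'.
have := running_sum_seg ha KN hs0 hs'; lra.
Qed.

Lemma running_sum_local_primitive g N t a s0 (b : cf_idx w) :
  continuous_on (@unitI R) g -> admissible g N t a -> unitI s0 -> cf_U b (g s0) ->
  exists2 d : R, 0 < d & forall s', unitI s' -> cf_U b (g s') -> `|s' - s0| < d ->
    running_sum g N t a s' - cf_f b (g s') = running_sum g N t a s0 - cf_f b (g s0).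
Proof.
move=> gc ha Is0 Ub; have /andP[s00 s01] := Is0.
have [KR KRN [eR eR0 heR]] := segment_right_of ha Is0.
have [KL KLN [eL eL0 heL]] := segment_left_of ha Is0.
have [dR dR0 hdR] := running_sum_local_seg gc ha KRN (heR s0 s01 (lexx _) ltac:(by rewrite subrr))
  Ub.
have [dL dL0 hdL] := running_sum_local_seg gc ha KLN (heL s0 s00 (lexx _) ltac:(by rewrite subrr))
  Ub.
exists (Num.min (Num.min dR dL) (Num.min eR eL)) => [|s' /andP[s'0 s'1] Ub'].
  by rewrite !lt_min dR0 dL0 eR0 eL0.
rewrite !lt_min => /andP[/andP[hdR' hdL'] /andP[heR' heL']].
move: heR' heL'; rewrite !ltr_norml => /andP[_ h1] /andP[h2 _].
have [le|lt] := leP s0 s'.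
  by apply: hdR => //; apply: heR => //; lra.
by apply: hdL => //; apply: heL => //; lra.
Qed.

Lemma subdivision_sum_unique g N1 t1 a1 N2 t2 a2 :
  continuous_on (@unitI R) g -> admissible g N1 t1 a1 -> admissible g N2 t2 a2 ->
  subdivision_sum g N1 t1 a1 = subdivision_sum g N2 t2 a2.
Proof.
move=> gc ha1 ha2; rewrite -(running_sum1 ha2) -[X in _ = X]subr0 -(running_sum0 ha2).
apply: (subdivision_sum_primitive ha1) => K KN s /andP[hs1 hs2].
have [_ _ _ tcov] := ha1; have hseg := admissible_unitI ha1.
have segI s' : t1 K <= s' <= t1 K.+1 -> unitI s'.
  case/andP: (hseg _ (ltnW KN)) (hseg _ KN) => h0 _ /andP[_ h1] /andP[h h'].
  by apply/andP; split; [exact: le_trans h0 h | exact: le_trans h' h1].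
apply: (@locally_constant_itv R
  (fun s => running_sum g N2 t2 a2 s - cf_f (a1 K) (g s))) => // s0 /andP[h01 h02].
have hs0 : t1 K <= s0 <= t1 K.+1 by rewrite h01 (le_trans h02 hs2).
have [d d0 hd] := running_sum_local_primitive gc ha2 (segI _ hs0) (tcov K KN _ hs0).
exists d => // s' /andP[h1 h2]; have hs' : t1 K <= s' <= t1 K.+1.
  by rewrite h1 (le_trans h2 hs2).
exact: hd (segI _ hs') (tcov K KN _ hs').
Qed.

Lemma path_integral_eq g v : continuous_on (@unitI R) g -> integral_value w g v ->
  path_integral w g = v.
Proof.
move=> gc hv; rewrite /path_integral.
have := xgetPex 0 (ex_intro _ v hv).
move: (xget _ _) => v' /integral_valueE [N' [t' [a' [ha' ->]]]].
move: hv => /integral_valueE [N [t [a [ha ->]]]].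
exact: subdivision_sum_unique.
Qed.

End Subdivision.
Arguments admissible {R X} w g N t a.
Arguments subdivision_sum {R X} w g N t a.
Arguments running_sum {R X} w g N t a s.

Definition continuous_family (R : realType) (Z X : topologicalType) (D : set Z)
    (H : Z -> R -> X) :=
  continuous_on [set p : Z * R | D p.1 /\ unitI p.2] (fun p => H p.1 p.2).

Section Families.
Variables (R : realType) (X : topologicalType).
Implicit Types (Z : topologicalType) (g : R -> X).

Lemma continuous_family_path Z (D : set Z) (H : Z -> R -> X) z :
  continuous_family D H -> D z -> continuous_on (@unitI R) (H z).
Proof.
move=> hc Dz s Is W nW; have [[A B] [/= nA nB] ABP] := hc (z, s) (conj Dz Is) W nW.
apply: filterS nB => s' Bs' Is'.
by apply: (ABP (z, s')) => //; split => //=; apply: nbhs_singleton.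
Qed.

Lemma continuous_family_at Z (D : set Z) (H : Z -> R -> X) s :
  continuous_family D H -> unitI s -> continuous_on D (fun z => H z s).
Proof.
move=> hc Is z Dz W nW; have [[A B] [/= nA nB] ABP] := hc (z, s) (conj Dz Is) W nW.
apply: filterS nA => z' Az' Dz'.
by apply: (ABP (z', s)) => //; split => //=; apply: nbhs_singleton.
Qed.

Lemma continuous_family_const Z (D : set Z) g :
  continuous_on (@unitI R) g -> continuous_family D (fun _ : Z => g).
Proof.
move=> gc [z s] /= [_ Is] W nW.
apply: filterS (nbhs_prod (filterT : nbhs z setT) (gc s Is W nW)).
by move=> [z' s'] /= [_ h] [_ Is']; exact: h.
Qed.

Lemma continuous_family_subset Z (D D' : set Z) (H : Z -> R -> X) :
  D' `<=` D -> continuous_family D H -> continuous_family D' H.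
Proof. by move=> sub; apply: continuous_on_subset => -[z s] [/= /sub]. Qed.

Variable w : closed_form R X.

Definition uniform_subdivision Z (D : set Z) (H : Z -> R -> X) (z0 : Z) (T : R) :=
  exists W, nbhs z0 W /\ exists N (t : nat -> R) (a : nat -> cf_idx w),
    [/\ t 0%N = 0, t N = T, (forall j, (j < N)%N -> t j < t j.+1) &
        forall j, (j < N)%N -> forall z, W z -> D z -> forall s, t j <= s <= t j.+1 ->
          cf_U (a j) (H z s)].

Lemma uniform_subdivision_extend Z (D : set Z) (H : Z -> R -> X) z0 T T'
    (W : set Z) (b : cf_idx w) :
  uniform_subdivision D H z0 T -> nbhs z0 W -> T < T' ->
  (forall z s, W z -> D z -> T <= s <= T' -> cf_U b (H z s)) ->
  uniform_subdivision D H z0 T'.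
Proof.
move=> [W' [nW' [N [t [a [t0 tN tinc tcov]]]]]] nW TT' hb.
exists (W `&` W'); split; first exact: filterI.
exists N.+1, (fun j => if (j <= N)%N then t j else T'),
             (fun j => if (j < N)%N then a j else b).
split=> //= [|j|j]; first by rewrite ltnn.
  rewrite ltnS => jN; case: (ltnP j N) => jN'; first by rewrite (ltnW jN') tinc.
  have -> : j = N by apply/eqP; rewrite eqn_leq jN jN'.
  by rewrite leqnn tN.
rewrite ltnS => jN z [Wz W'z] Dz s; case: (ltnP j N) => jN'.
  by rewrite (ltnW jN'); apply: tcov.
have -> : j = N by apply/eqP; rewrite eqn_leq jN jN'.
by rewrite leqnn tN; apply: hb.
Qed.

(* Lebesgue-number argument: the supremum of the [T] admitting a uniform
   subdivision of [[0, T]] is attained and equals 1. *)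
Lemma uniform_subdivision_exists Z (D : set Z) (H : Z -> R -> X) z0 :
  continuous_family D H -> D z0 -> uniform_subdivision D H z0 1.
Proof.
move=> hc Dz0; have [a0 _] := cf_cover w (H z0 0).
pose A := [set T : R | 0 <= T <= 1 /\ uniform_subdivision D H z0 T].
have A0 : A 0.
  split; first by rewrite lexx ler01.
  exists setT; split; first exact: filterT.
  by exists 0%N, (fun _ => 0), (fun _ => a0); split.
have supA : has_sup A by split; [exists 0 | exists 1 => T [/andP[_ ->]]].
pose m := sup A.
have m0 : 0 <= m by apply: sup_upper_bound.
have m1 : m <= 1 by apply: ge_sup; [exists 0 | move=> T [/andP[_ ->]]].
have [b Ub] := cf_cover w (H z0 m).
have nU : nbhs (H z0 m) (cf_U b) by apply: open_nbhs_nbhs; split; [apply: cf_open|].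
have [[W B] [/= nW /nbhsRP[d d0 hd]] WB] :=
  hc (z0, m) (conj Dz0 (introT andP (conj m0 m1))) _ nU.
have [T [/andP[T0 T1] AT] mT] := sup_adherent d0 supA; rewrite -/m in mT.
have Tm : T <= m by apply: sup_upper_bound => //; split; [rewrite T0 T1|].
have [<-//|T_neq1] := eqVneq T 1.
have T_lt1 : T < 1 by rewrite lt_neqAle T_neq1 T1.
pose T' := Num.min (m + d / 2) 1.
have T'1 : T' <= 1 by rewrite ge_min lexx orbT.
have T'md : T' <= m + d / 2 by rewrite ge_min lexx.
have TT' : T < T' by rewrite lt_min T_lt1 andbT; lra.
have AT' : uniform_subdivision D H z0 T'.
  apply: (uniform_subdivision_extend AT nW TT') => z s Wz Dz /andP[Ts sT'].
  apply: (WB (z, s)); last by split=> //; rewrite /unitI /=; apply/andP; split; lra.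
  by split=> //=; apply: hd; rewrite ltr_norml; apply/andP; split; lra.
have T'm : T' <= m by apply: sup_upper_bound => //; split => //; apply/andP; split; lra.
by move: AT' T'm; rewrite /T' minEle; case: ifP => // _ _; lra.
Qed.

Lemma path_admissible g : continuous_on (@unitI R) g ->
  exists N t a, admissible w g N t a.
Proof.
move=> gc; have [W [nW [N [t [a [t0 tN tinc tcov]]]]]] :=
  @uniform_subdivision_exists R [set: R] (fun=> g) 0 (continuous_family_const gc) I.
exists N, t, a; split => // j jN s hs.
exact: tcov j jN 0 (nbhs_singleton nW) I s hs.
Qed.

Lemma path_integralE g N t a : continuous_on (@unitI R) g ->
  admissible w g N t a -> path_integral w g = subdivision_sum w g N t a.
Proof.
by move=> gc ha; apply: path_integral_eq => //; apply/integral_valueE; exists N, t, a.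
Qed.

Lemma path_integral_family_locally_bounded Z (D : set Z) (H : Z -> R -> X) z0 :
  continuous_family D H -> D z0 -> exists M : R,
    \forall z \near z0, D z -> `|path_integral w (H z)| <= M.
Proof.
move=> hc Dz0.
have [W [nW [N [t [a [t0 tN tinc tcov]]]]]] := uniform_subdivision_exists hc Dz0.
have ha z : W z -> D z -> admissible w (H z) N t a.
  by move=> Wz Dz; split => // j jN s hs; apply: tcov.
have tI := admissible_unitI (ha z0 (nbhs_singleton nW) Dz0).
pose c j s := cf_f (a j) (H z0 s).
have near_c (j : 'I_N) i : (i <= N)%N -> t j <= t i <= t j.+1 ->
    \forall z \near z0, D z -> `|cf_f (a j) (H z (t i)) - c j (t i)| < 1.
  move=> iN hs; have hU := tcov j (ltn_ord j) z0 (nbhs_singleton nW) Dz0 _ hs.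
  have fc : continuous_on (cf_U (a j)) (cf_f (a j)) by apply/continuous_onP/cf_cont.
  have n1 := continuous_family_at hc (tI i iN) Dz0
    (fc _ hU _ (nbhsx_ballx (cf_f (a j) (H z0 (t i))) _ ltr01)).
  apply: filterS (filterI nW n1) => z [Wz h] Dz.
  by rewrite distrC; apply: h Dz (tcov j (ltn_ord j) z Wz Dz _ hs).
exists (\sum_(j < N) (`|c j (t j.+1)| + `|c j (t j)| + 2)).
have tj (j : 'I_N) : t j <= t j.+1 by apply/ltW/tinc.
have near_all : \forall z \near z0, forall j : 'I_N,
    (D z -> `|cf_f (a j) (H z (t j.+1)) - c j (t j.+1)| < 1) /\
    (D z -> `|cf_f (a j) (H z (t j)) - c j (t j)| < 1).
  apply: filter_forall => j; apply: filterI.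
    by apply: near_c; rewrite ?lexx ?tj.
  by apply: near_c; rewrite ?lexx ?tj // ltnW.
apply: filterS (filterI nW near_all) => z [Wz hall] Dz.
rewrite (path_integralE (continuous_family_path hc Dz) (ha z Wz Dz)).
apply: le_trans (ler_norm_sum _ _ _) _; apply: ler_sum => j _.
have [/(_ Dz) h1 /(_ Dz) h2] := hall j.
move: h1 h2; set u := cf_f _ _; set v := cf_f _ _; set p := c j _; set q := c j _.
move=> hu hv; have -> : u - v = (u - p) - (v - q) + (p - q) by ring.
apply: le_trans (ler_normD _ _) _.
apply: le_trans (lerD (ler_normB _ _) (ler_normB _ _)) _; lra.
Qed.

Lemma path_integral_family_bounded Z (K : set Z) (H : Z -> R -> X) :
  compact K -> continuous_family K H ->
  exists M : R, forall z, K z -> `|path_integral w (H z)| <= M.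
Proof.
move=> cK hc.
have nc := proj2 (near_covering_withinP K) (proj1 (compact_near_coveringP K) cK).
have : \forall M \near (@pinfty_nbhs R),
    K `<=` (fun z => `|path_integral w (H z)| <= M).
  apply: (nc R _ (fun M z => `|path_integral w (H z)| <= M)) => z Kz.
  have [M0 hM0] := path_integral_family_locally_bounded hc Kz.
  exists ([set z | K z -> `|path_integral w (H z)| <= M0], [set M | M0 <= M]).
    by split => //=; apply: nbhs_pinfty_ge; apply: num_real.
  by move=> [z' M] /= [h1 h2] Kz'; apply: le_trans (h1 Kz') h2.
by move=> /filter_ex[M hM]; exists M.
Qed.

End Families.

(** * Concatenation of paths *)

Section Concatenation.
Variables (R : realType) (X : topologicalType).
Implicit Types (Z : topologicalType) (al be : R -> X).

Definition path_concat al be : R -> X :=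
  fun s => if s <= 2^-1 then al (2 * s) else be (2 * s - 1).

Definition path_rev al : R -> X := fun s => al (1 - s).

Lemma path_concatL al be s : s <= 2^-1 -> path_concat al be s = al (2 * s).
Proof. by rewrite /path_concat => ->. Qed.

Lemma path_concatR al be s : al 1 = be 0 -> 2^-1 <= s ->
  path_concat al be s = be (2 * s - 1).
Proof.
rewrite /path_concat => e hs; case: ifP => // h.
have -> : s = 2^-1 by apply/eqP; rewrite eq_le h hs.
by rewrite mulfV ?subrr // pnatr_eq0.
Qed.

Lemma path_concat0 al be : path_concat al be 0 = al 0.
Proof. by rewrite path_concatL ?mulr0 // invr_ge0. Qed.

Lemma path_concat1 al be : al 1 = be 0 -> path_concat al be 1 = be 1.
Proof.
move=> e; rewrite path_concatR ?invf_le1 ?ler1n //.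
by rewrite mulr1 -addrA subrr addr0.
Qed.

Lemma nbhs_snd Z (z : Z) (s : R) (P : set R) :
  nbhs s P -> nbhs (z, s) [set p | P p.2].
Proof. by move=> nP; apply: filterS (nbhs_prod (filterT : nbhs z setT) nP) => p []. Qed.

Lemma continuous_family_affine Z (D : set Z) (A : Z -> R -> X) z s c e W :
  continuous_family D A -> D z -> 0 < c -> unitI (c * s + e) ->
  nbhs (A z (c * s + e)) W ->
  \forall p \near (z, s), D p.1 -> unitI (c * p.2 + e) -> W (A p.1 (c * p.2 + e)).
Proof.
move=> hA Dz c0 Is nW.
have [[U B] [/= nU nB] UB] := hA (z, c * s + e) (conj Dz Is) W nW.
have [d d0 hd] := (nbhsRP _ _).1 nB.
have nd : nbhs s [set u | `|u - s| < d / c].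
  by apply/nbhsRP; exists (d / c); rewrite ?divr_gt0.
apply: filterS (nbhs_prod nU nd) => -[z' u] /= [Uz' hu] Dz' Iu.
apply: (UB (z', c * u + e)) => //; split => //=; apply: hd.
rewrite (_ : _ - _ = c * (u - s)); last by ring.
by rewrite normrM gtr0_norm // mulrC -ltr_pdivlMr.
Qed.

Lemma near_concat_left Z (D : set Z) (A B : Z -> R -> X) z s W :
  continuous_family D A -> D z -> unitI s ->
  nbhs (path_concat (A z) (B z) s) W ->
  \forall p \near (z, s), D p.1 -> unitI p.2 -> p.2 <= 2^-1 ->
    W (path_concat (A p.1) (B p.1) p.2).
Proof.
move=> hA Dz /andP[s0 s1] nW; have [hs|hs] := leP s (2^-1); last first.
  by apply: filterS (nbhs_snd z (lt_nbhsr hs)) => p /= hp _ _ hp'; lra.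
rewrite path_concatL // -[2 * s]addr0 in nW.
have I2s : unitI (2 * s + 0) by apply/andP; split; lra.
apply: filterS (continuous_family_affine hA Dz _ I2s nW) => // -[z' u] /= h Dz'.
move=> /andP[u0 u1] hu; rewrite path_concatL // -[2 * u]addr0.
by apply: h => //; apply/andP; split; lra.
Qed.

Lemma near_concat_right Z (D : set Z) (A B : Z -> R -> X) z s W :
  continuous_family D B -> (forall z, D z -> A z 1 = B z 0) -> D z -> unitI s ->
  nbhs (path_concat (A z) (B z) s) W ->
  \forall p \near (z, s), D p.1 -> unitI p.2 -> 2^-1 <= p.2 ->
    W (path_concat (A p.1) (B p.1) p.2).
Proof.
move=> hB hAB Dz /andP[s0 s1] nW; have [hs|hs] := leP (2^-1) s; last first.
  by apply: filterS (nbhs_snd z (lt_nbhsl hs)) => p /= hp _ _ hp'; lra.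
rewrite path_concatR ?hAB // in nW.
have I2s : unitI (2 * s + -1) by apply/andP; split; lra.
apply: filterS (continuous_family_affine hB Dz _ I2s nW) => // -[z' u] /= h Dz'.
move=> /andP[u0 u1] hu; rewrite path_concatR ?hAB //.
by apply: h => //; apply/andP; split; lra.
Qed.

Lemma continuous_family_concat Z (D : set Z) (A B : Z -> R -> X) :
  continuous_family D A -> continuous_family D B ->
  (forall z, D z -> A z 1 = B z 0) ->
  continuous_family D (fun z => path_concat (A z) (B z)).
Proof.
move=> hA hB hAB [z s] /= [Dz Is] W nW.
apply: filterS (filterI (near_concat_left hA Dz Is nW)
  (near_concat_right hB hAB Dz Is nW)) => p [hl hr] [Dp Ip].
by have [hp|hp] := leP p.2 (2^-1); [apply: hl | apply/hr/ltW].
Qed.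

Lemma continuous_path_concat al be :
  continuous_on (@unitI R) al -> continuous_on (@unitI R) be -> al 1 = be 0 ->
  continuous_on (@unitI R) (path_concat al be).
Proof.
move=> ha hb e.
have := @continuous_family_concat R setT (fun=> al) (fun=> be)
  (continuous_family_const ha) (continuous_family_const hb) (fun _ _ => e).
by move=> /continuous_family_path; apply; exact: (I : setT 0).
Qed.

Lemma continuous_path_rev al :
  continuous_on (@unitI R) al -> continuous_on (@unitI R) (path_rev al).
Proof.
move=> ha; change (continuous_on (@unitI R) (al \o (fun s => 1 - s))).
apply: continuous_on_comp ha _.
  by apply: continuous_continuous_on => s; apply: continuousB; [apply: cst_continuous|].
by move=> s /andP[s0 s1]; apply/andP; split; lra.
Qed.

End Concatenation.

Section ConcatIntegral.
Variables (R : realType) (X : topologicalType) (w : closed_form R X).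
Variables (al be : R -> X) (N1 N2 : nat) (t1 t2 : nat -> R).
Variables (a1 a2 : nat -> cf_idx w).
Hypotheses (ha1 : admissible w al N1 t1 a1) (ha2 : admissible w be N2 t2 a2).
Hypothesis al1_be0 : al 1 = be 0.

Definition concat_times j :=
  if (j <= N1)%N then t1 j / 2 else (1 + t2 (j - N1)%N) / 2.

Definition concat_labels j := if (j < N1)%N then a1 j else a2 (j - N1)%N.

Lemma concat_timesL j : (j <= N1)%N -> concat_times j = t1 j / 2.
Proof. by rewrite /concat_times => ->. Qed.

Lemma concat_timesR j : (N1 <= j)%N -> concat_times j = (1 + t2 (j - N1)%N) / 2.
Proof.
have [_ t1N _ _] := ha1; have [t20 _ _ _] := ha2.
rewrite /concat_times => jN; case: ifP => // jN'.
have -> : j = N1 by apply/eqP; rewrite eqn_leq jN jN'.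
by rewrite subnn t1N t20 addr0.
Qed.

Lemma concat_labelsR j : (N1 <= j)%N -> concat_labels j = a2 (j - N1)%N.
Proof. by rewrite /concat_labels ltnNge => ->. Qed.

Lemma concat_half (x : R) : 2 * (x / 2) = x.
Proof. by rewrite mulrC -mulrA mulVf ?mulr1 // pnatr_eq0. Qed.

Lemma admissible_concat :
  admissible w (path_concat al be) (N1 + N2) concat_times concat_labels.
Proof.
have [t10 t1N t1inc t1cov] := ha1; have [t20 t2N t2inc t2cov] := ha2.
have I1 := admissible_unitI ha1; have I2 := admissible_unitI ha2.
split.
- by rewrite concat_timesL // t10 mul0r.
- by rewrite concat_timesR ?leq_addr // addKn t2N; field.
- move=> j jN; case: (ltnP j N1) => jN1.
    by rewrite !concat_timesL ?(ltnW jN1) // ltr_pM2r ?invr_gt0 ?t1inc.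
  rewrite !concat_timesR ?(leq_trans jN1) // subSn // ltr_pM2r ?invr_gt0 //.
  by rewrite ltrD2l t2inc // ltn_subLR.
move=> j jN s; case: (ltnP j N1) => jN1.
  rewrite !concat_timesL ?(ltnW jN1) // /concat_labels jN1 => /andP[h1 h2].
  have /andP[_ u1] := I1 j.+1 jN1.
  rewrite path_concatL; last by lra.
  by apply: t1cov => //; apply/andP; split; lra.
rewrite !concat_timesR ?(leq_trans jN1) // subSn // concat_labelsR // => /andP[h1 h2].
have jN2 : (j - N1 < N2)%N by rewrite ltn_subLR.
have /andP[u0 _] := I2 (j - N1)%N (ltnW jN2).
rewrite path_concatR //; last by lra.
by apply: t2cov => //; apply/andP; split; lra.
Qed.

Lemma subdivision_sum_concat :
  subdivision_sum w (path_concat al be) (N1 + N2) concat_times concat_labels =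
  subdivision_sum w al N1 t1 a1 + subdivision_sum w be N2 t2 a2.
Proof.
have I1 := admissible_unitI ha1; have I2 := admissible_unitI ha2.
rewrite /subdivision_sum big_split_ord /=; congr (_ + _); apply: eq_bigr => i _.
  have iN := ltn_ord i; have /andP[_ u1] := I1 i.+1 iN.
  have /andP[_ u2] := I1 i (ltnW iN).
  rewrite /concat_labels iN !concat_timesL ?(ltnW iN) //.
  by rewrite !path_concatL ?concat_half //; lra.
have e2 (x : R) : 2 * ((1 + x) / 2) - 1 = x by rewrite concat_half; ring.
rewrite concat_labelsR ?leq_addr // addKn -addnS.
rewrite !concat_timesR ?leq_addr // !addKn.
have iN := ltn_ord i; have /andP[u1 _] := I2 i.+1 iN.
have /andP[u2 _] := I2 i (ltnW iN).
by rewrite !path_concatR ?e2 //; lra.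
Qed.

End ConcatIntegral.

Lemma path_integral_concat (R : realType) (X : topologicalType) (w : closed_form R X)
    (al be : R -> X) :
  continuous_on (@unitI R) al -> continuous_on (@unitI R) be -> al 1 = be 0 ->
  path_integral w (path_concat al be) = path_integral w al + path_integral w be.
Proof.
move=> ha hb e.
have [N1 [t1 [a1 h1]]] := path_admissible w ha.
have [N2 [t2 [a2 h2]]] := path_admissible w hb.
rewrite (path_integralE (continuous_path_concat ha hb e) (admissible_concat h1 h2 e)).
by rewrite subdivision_sum_concat -?(path_integralE ha h1) -?(path_integralE hb h2).
Qed.

(** * Homotopy invariance on loops *)

Lemma telescope_sum_switch (R : realType) (G : nat -> R -> R) (tau : nat -> R) n :
  (forall j, (0 < j <= n)%N -> G j.-1 (tau j) = G j (tau j)) ->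
  \sum_(j < n.+1) (G j (tau j.+1) - G j (tau j)) = G n (tau n.+1) - G 0%N (tau 0%N).
Proof.
elim: n => [|n IH] hG; first by rewrite big_ord_recr big_ord0 /= add0r.
rewrite big_ord_recr /= IH; last by move=> j /andP[j0 jn]; rewrite hG ?j0 ?(leqW jn).
by rewrite (hG n.+1) ?leqnn //; ring.
Qed.

Section LoopHomotopy.
Variables (R : realType) (X : topologicalType) (w : closed_form R X).

Lemma subdivision_sum_loop_eq (g1 g2 : R -> X) N tau (a : nat -> cf_idx w) :
  (0 < N)%N -> tau 0%N = 0 -> tau N = 1 -> g1 0 = g1 1 -> g2 0 = g2 1 ->
  (forall j, (0 < j < N)%N ->
     cf_f (a j.-1) (g1 (tau j)) - cf_f (a j) (g1 (tau j)) =
     cf_f (a j.-1) (g2 (tau j)) - cf_f (a j) (g2 (tau j))) ->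
  cf_f (a N.-1) (g1 0) - cf_f (a 0%N) (g1 0) =
  cf_f (a N.-1) (g2 0) - cf_f (a 0%N) (g2 0) ->
  subdivision_sum w g1 N tau a = subdivision_sum w g2 N tau a.
Proof.
move=> N0 tau0 tauN loop1 loop2 hswitch hends; apply/eqP; rewrite -subr_eq0.
pose G j s := cf_f (a j) (g1 s) - cf_f (a j) (g2 s).
rewrite /subdivision_sum -sumrB.
rewrite (eq_bigr (fun j : 'I_N => G j (tau j.+1) - G j (tau j))); last first.
  by move=> j _; rewrite /G; ring.
rewrite -(prednK N0) telescope_sum_switch => [|j /andP[j0 jN]].
  by rewrite prednK // tauN tau0 /G -loop1 -loop2; apply/eqP; lra.
have jN' : (j < N)%N by rewrite -(prednK N0) ltnS.
by have := hswitch j; rewrite j0 jN' /G; lra.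
Qed.

Lemma near_diff_const (Z : topologicalType) (D : set Z) (S : Z -> R -> X) z0 s (b c : cf_idx w) :
  continuous_family D S -> D z0 -> unitI s -> cf_U b (S z0 s) -> cf_U c (S z0 s) ->
  \forall z \near z0, D z -> cf_U b (S z s) -> cf_U c (S z s) ->
     cf_f b (S z s) - cf_f c (S z s) = cf_f b (S z0 s) - cf_f c (S z0 s).
Proof.
move=> hc Dz0 Is Ub Uc; have [Nb [nN hN]] := cf_locconst Ub Uc.
apply: filterS (continuous_family_at hc Is Dz0 nN) => z h Dz.
exact: hN _ (h Dz).
Qed.

Variable S : R -> R -> X.
Hypotheses (hS : continuous_family (@unitI R) S)
  (hloop : forall t, unitI t -> S t 0 = S t 1).

Lemma path_integral_loop_near t0 : unitI t0 ->
  \forall t \near t0, unitI t -> path_integral w (S t) = path_integral w (S t0).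
Proof.
move=> It0.
have [W [nW [N [tau [a [tau0 tauN tinc tcov]]]]]] := uniform_subdivision_exists w hS It0.
have Wt0 : W t0 := nbhs_singleton nW.
have ha t : W t -> unitI t -> admissible w (S t) N tau a.
  by move=> Wt It; split => // j jN s hs; apply: tcov.
have N0 := admissible_gt0 (ha t0 Wt0 It0).
have Itau := admissible_unitI (ha t0 Wt0 It0).
have cov j s : (j < N)%N -> tau j <= s <= tau j.+1 ->
    forall t, W t -> unitI t -> cf_U (a j) (S t s).
  by move=> jN hs t Wt It; apply: tcov.
have tau_le := steps_le tinc.
have near_switch : \forall t \near t0, forall j : 'I_N, (0 < j)%N -> W t -> unitI t ->
    cf_f (a j.-1) (S t (tau j)) - cf_f (a j) (S t (tau j)) =
    cf_f (a j.-1) (S t0 (tau j)) - cf_f (a j) (S t0 (tau j)).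
  apply: (@filter_forall _ _ _ (nbhs t0) _) => j; have jN := ltn_ord j.
  have [->|j0] := posnP j; first exact: nearW.
  have covl := cov j.-1 (tau j) (leq_ltn_trans (leq_pred j) jN).
  rewrite prednK ?lexx ?andbT ?tau_le ?leq_pred ?(ltnW jN) // in covl.
  have covr := cov j (tau j) jN; rewrite lexx tau_le ?(leqnSn j) // in covr.
  apply: filterS (near_diff_const hS It0 (Itau j (ltnW jN))
    (covl erefl t0 Wt0 It0) (covr erefl t0 Wt0 It0)) => t h _ Wt It.
  exact: h It (covl erefl t Wt It) (covr erefl t Wt It).
have covN : forall t, W t -> unitI t -> cf_U (a N.-1) (S t 0).
  move=> t Wt It; rewrite hloop // -tauN.
  by apply: cov; rewrite ?prednK ?lexx ?andbT ?tau_le ?leq_pred.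
have cov0 : forall t, W t -> unitI t -> cf_U (a 0%N) (S t 0).
  by move=> t Wt It; rewrite -tau0; apply: cov; rewrite ?lexx ?tau_le.
have I0 : unitI (0 : R) by apply/andP; rewrite lexx ler01.
have near_ends := near_diff_const hS It0 I0 (covN t0 Wt0 It0) (cov0 t0 Wt0 It0).
apply: filterS (filterI nW (filterI near_switch near_ends)) => t [Wt [hsw hend]] It.
rewrite (path_integralE (continuous_family_path hS It) (ha t Wt It)).
rewrite (path_integralE (continuous_family_path hS It0) (ha t0 Wt0 It0)).
apply: subdivision_sum_loop_eq; rewrite -?hloop //.
  by move=> j /andP[j0 jN]; exact: (hsw (Ordinal jN) j0 Wt It).
exact: hend It (covN t Wt It) (cov0 t Wt It).
Qed.

Lemma path_integral_loop_homotopy : path_integral w (S 0) = path_integral w (S 1).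
Proof.
apply/esym/(@locally_constant_itv R (fun t => path_integral w (S t)) 0 1 ler01).
move=> t0 It0; have /nbhsRP[d d0 hd] := path_integral_loop_near It0.
by exists d => // t It hdt; apply: hd.
Qed.

End LoopHomotopy.

(** * Cells and the defect of a map *)

Section Disk.
Variable R : realType.

Lemma continuous_sum (T : topologicalType) n (f : 'I_n -> T -> R) :
  (forall i, continuous (f i)) -> continuous (fun x => \sum_(i < n) f i x).
Proof.
elim: n f => [|n IH] f hf.
  by under eq_fun do rewrite big_ord0; apply: cst_continuous.
under eq_fun do rewrite big_ord_recr /=.
by move=> x; apply: continuousD; [apply: IH => i; apply: hf | apply: hf].
Qed.

Lemma sqnorm_continuous n : continuous (@sqnorm R n).
Proof.
apply: continuous_sum => i v; under eq_fun do rewrite expr2.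
by apply: continuousM; apply: coord_continuous.
Qed.

Lemma disk_closed n : closed (@disk R n).
Proof.
apply: (@preimage_closed _ _ _ [set x : R | x <= 1]); last exact: closed_le.
by move=> v _; apply: sqnorm_continuous.
Qed.

Lemma disk_coord n (v : 'rV[R]_n) i : disk v -> -1 <= v ord0 i <= 1.
Proof.
rewrite /disk /sqnorm /= (bigD1 i) //=.
have : 0 <= \sum_(j < n | j != i) v ord0 j ^+ 2 by apply: sumr_ge0 => j _; apply: sqr_ge0.
by move: (v ord0 i) => x h1 h2; apply/andP; split; nra.
Qed.

Lemma disk_compact n : compact (@disk R n).
Proof.
apply: (subclosed_compact (@disk_closed n)
  (@rV_compact _ _ (fun=> `[(-1 : R), 1]%classic) (fun=> @segment_compact _ _ _))).
by move=> v hv i; rewrite /= in_itv /=; apply: disk_coord.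
Qed.

Lemma diskZ n (s : R) (v : 'rV[R]_n) : unitI s -> disk v -> disk (s *: v).
Proof.
rewrite /unitI /disk /= => /andP[s0 s1] hv.
have -> : sqnorm (s *: v) = s ^+ 2 * sqnorm v.
  by rewrite /sqnorm mulr_sumr; apply: eq_bigr => i _; rewrite mxE exprMn.
have : 0 <= sqnorm v by apply: sumr_ge0 => i _; apply: sqr_ge0.
nra.
Qed.

End Disk.

Definition path_between (R : realType) (X : topologicalType) (x y : X) (q : R -> X) :=
  [/\ continuous_on (@unitI R) q, q 0 = x & q 1 = y].

Section CellDefect.
Local Unset Implicit Arguments.
Variables (R : realType) (X : topologicalType) (k : nat) (dim : 'I_k -> nat).
Variable Ph : forall i : 'I_k, 'rV[R]_(dim i) -> X.
Local Set Implicit Arguments.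
Hypothesis Ph_continuous : forall i, continuous_on (@disk R (dim i)) (Ph i).
Hypothesis Ph_cover : forall x : X, exists i, (Ph i @` @odisk R (dim i)) x.

Lemma cells_compact : compact (@setT X).
Proof.
have -> : @setT X = \big[setU/set0]_(i <- enum 'I_k) (Ph i @` @disk R (dim i)).
  apply/seteqP; split => // x _; have [i [v hv <-]] := Ph_cover x.
  rewrite -bigcup_seq; exists i; first by rewrite /= mem_enum.
  by exists v => //; apply: ltW.
apply: bigsetU_compact => i _; apply: continuous_compact; last exact: disk_compact.
exact/continuous_onP.
Qed.

Definition radial_path i (v : 'rV[R]_(dim i)) : R -> X := fun s => Ph i (s *: v).

Lemma continuous_family_radial i : continuous_family (@disk R (dim i)) (@radial_path i).
Proof.
apply: (@continuous_on_comp _ _ _ _ _ (fun p : 'rV[R]_(dim i) * R => p.2 *: p.1)).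
- apply: continuous_continuous_on => p; apply: continuousZ.
    exact: snd_continuous.
  exact: fst_continuous.
- exact: Ph_continuous.
- by move=> [v s] [/= dv Is]; apply: diskZ.
Qed.

Lemma radial_path_between i v : disk v -> path_between (Ph i 0) (Ph i v) (@radial_path i v).
Proof.
move=> dv; split; last by rewrite /radial_path scale1r.
  exact: continuous_family_path (@continuous_family_radial i) dv.
by rewrite /radial_path scale0r.
Qed.

Variable J : (R -> X) -> R.
Hypothesis J_concat : forall al be, continuous_on (@unitI R) al ->
  continuous_on (@unitI R) be -> al 1 = be 0 -> J (path_concat al be) = J al + J be.
Hypothesis J_loop : forall l, continuous_on (@unitI R) l -> l 0 = l 1 -> J l = 0.
Hypothesis J_radial : forall i, exists C : R, forall v, disk v -> `|J (@radial_path i v)| <= C.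

Lemma defect_rev al : continuous_on (@unitI R) al -> J (path_rev al) = - J al.
Proof.
move=> ha; have hr := continuous_path_rev ha.
have e : al 1 = path_rev al 0 by rewrite /path_rev subr0.
have := J_loop (continuous_path_concat ha hr e).
rewrite path_concat0 path_concat1 // /path_rev subrr J_concat // => /(_ erefl); lra.
Qed.

Lemma defect_path_indep (x y : X) p q :
  path_between x y p -> path_between x y q -> J p = J q.
Proof.
move=> [hp p0 p1] [hq q0 q1]; have hr := continuous_path_rev hq.
have e : p 1 = path_rev q 0 by rewrite /path_rev subr0 p1 q1.
have := J_loop (continuous_path_concat hp hr e).
rewrite path_concat0 path_concat1 // /path_rev subrr p0 q0 J_concat // defect_rev //.
by move=> /(_ erefl); lra.
Qed.

Lemma defect_via_centres g : continuous_on (@unitI R) g ->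
  exists i j (v : 'rV_(dim i)) (u : 'rV_(dim j)) b, [/\ disk v, disk u,
    path_between (Ph i 0) (Ph j 0) b &
    J g = J b - J (radial_path v) + J (radial_path u)].
Proof.
move=> hg; have [i [v /ltW dv gv]] := Ph_cover (g 0).
have [j [u /ltW du gu]] := Ph_cover (g 1).
have [hri ri0 ri1] := radial_path_between dv.
have [hrj rj0 rj1] := radial_path_between du.
have e2 : path_concat (radial_path v) g 1 = path_rev (radial_path u) 0.
  by rewrite path_concat1 ?ri1 // /path_rev subr0 rj1.
have hvg := continuous_path_concat hri hg (etrans ri1 gv).
exists i, j, v, u, (path_concat (path_concat (radial_path v) g) (path_rev (radial_path u))).
split=> //; last by rewrite !J_concat ?defect_rev ?ri1 //; [ring | apply: continuous_path_rev].
split; first exact: continuous_path_concat (continuous_path_rev hrj) e2.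
  by rewrite !path_concat0.
by rewrite path_concat1 // /path_rev subrr rj0.
Qed.

Lemma defect_bounded : exists C : R, forall g, continuous_on (@unitI R) g -> J g <= C.
Proof.
have /choice [Cr hCr] := J_radial.
pose c i := Ph i 0.
(* By [defect_path_indep], one path per pair of cell centres determines [J]. *)
have /choice [p hp] : forall ij : 'I_k * 'I_k, exists p : R -> X,
    (exists q : R -> X, path_between (c ij.1) (c ij.2) q) ->
    path_between (c ij.1) (c ij.2) p.
  move=> ij.
  have [[q hq]|nq] := pselect (exists q : R -> X, path_between (c ij.1) (c ij.2) q).
    by exists q.
  by exists (fun=> c ij.1) => /nq.
have sum_ge (I : finType) (F : I -> R) i : `|F i| <= \sum_i0 `|F i0|.
  by rewrite (bigD1 i) //= lerDl sumr_ge0.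
exists (\sum_ij `|J (p ij)| + 2 * \sum_i `|Cr i|) => g hg.
have [i [j [v [u [b [dv du hb ->]]]]]] := defect_via_centres hg.
rewrite (defect_path_indep hb (hp (i, j) (ex_intro _ b hb))).
have := sum_ge _ (J \o p) (i, j); have := sum_ge _ Cr i; have := sum_ge _ Cr j.
have := hCr i v dv; have := hCr j u du; rewrite /=.
have := ler_norm (J (p (i, j))); have := ler_norm (J (radial_path u)).
have := ler_norm (- J (radial_path v)); rewrite normrN.
have := ler_norm (Cr i); have := ler_norm (Cr j); lra.
Qed.

End CellDefect.

(** * Transfer of category covers *)

Section Transfer.
Variable R : realType.

Lemma continuous_family_pull (X Y : topologicalType) (D' : set X) (D : set Y)
    (a : X -> Y) (b : Y -> X) (H : Y -> R -> Y) :
  continuous a -> continuous b -> continuous_family D H ->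
  (forall x, D' x -> D (a x)) -> continuous_family D' (fun x s => b (H (a x) s)).
Proof.
move=> ca cb hH hD.
have ha : continuous_on [set p : X * R | D' p.1 /\ unitI p.2] (fun p => (a p.1, p.2)).
  apply: continuous_on_pair; apply: continuous_continuous_on; last exact: snd_continuous.
  by move=> p; apply: continuous_comp; [apply: fst_continuous | apply: ca].
have hHa := continuous_on_comp ha hH (fun p '(conj Dp Ip) => conj (hD _ Dp) Ip).
exact: continuous_on_comp hHa (continuous_continuous_on (A := setT) cb) (fun _ _ => I).
Qed.

Lemma homotopic_family (X : topologicalType) (f : X -> X) :
  homotopic R f id -> exists G : X -> R -> X,
    [/\ continuous_family setT G, forall x, G x 0 = x & forall x, G x 1 = f x].
Proof.
move=> [H [/continuous_onP hc h0 h1]]; exists (fun x s => H x (1 - s)).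
split=> [||x]; rewrite ?subr0 ?subrr //.
have hflip : continuous_on [set p : X * R | setT p.1 /\ unitI p.2] (fun p => (p.1, 1 - p.2)).
  apply: continuous_on_pair; apply: continuous_continuous_on; first exact: fst_continuous.
  by move=> p; apply: continuousB; [apply: cst_continuous | apply: snd_continuous].
apply: (continuous_on_comp hflip hc) => -[x s] [_ /andP[/= s0 s1]].
by apply/andP; split; rewrite /=; lra.
Qed.

Lemma path_integral_homotopic_loop (X : topologicalType) (w : closed_form R X)
    (f : X -> X) (l : R -> X) :
  homotopic R f id -> continuous_on (@unitI R) l -> l 0 = l 1 ->
  path_integral w (f \o l) = path_integral w l.
Proof.
move=> [K [/continuous_onP hK K0 K1]] hl e.
have hswap : continuous_on [set p : R * R | unitI p.1 /\ unitI p.2] (fun p => (l p.2, p.1)).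
  apply: continuous_on_pair; last exact/continuous_continuous_on/fst_continuous.
  apply: (continuous_on_comp (continuous_continuous_on (@snd_continuous R R)) hl).
  by move=> p [].
have hS : continuous_family (@unitI R) (fun t s => K (l s) t).
  by apply: (continuous_on_comp hswap hK) => p [].
have := path_integral_loop_homotopy w hS (fun t _ => congr1 (K^~ t) e).
by rewrite /comp; under eq_fun do rewrite K0; under [in RHS]eq_fun do rewrite K1.
Qed.

Variables (X Y : topologicalType) (wX : closed_form R X) (wY : closed_form R Y).
Variables (a : X -> Y) (b : Y -> X) (G : X -> R -> X).
Hypotheses (ca : continuous a) (cb : continuous b) (hG : continuous_family setT G).
Hypotheses (G0 : forall x, G x 0 = x) (G1 : forall x, G x 1 = b (a x)).

Lemma continuous_family_follow (D : set Y) (H : Y -> R -> Y) :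
  continuous_family D H -> (forall y, D y -> H y 0 = y) ->
  continuous_family (a @^-1` D) (fun x => path_concat (G x) (fun s => b (H (a x) s))).
Proof.
move=> hH H0; apply: continuous_family_concat.
- exact: continuous_family_subset (fun _ _ => I) hG.
- exact: (continuous_family_pull ca cb hH (fun x (hx : (a @^-1` D) x) => hx)).
- by move=> x /H0 ->; rewrite G1.
Qed.

Lemma cat_cover_prop_transfer k :
  compact (@setT X) ->
  (exists C : R, forall g, continuous_on (@unitI R) g ->
      path_integral wX (b \o g) <= path_integral wY g + C) ->
  cat_cover_prop wY k -> cat_cover_prop wX k.
Proof.
move=> cX [C hC] hY N N0.
have [C0 hC0] := path_integral_family_bounded wX cX hG.
pose N' := (Num.truncn (N%:R + C0 + C)).+1.
have hN' : N%:R + C0 + C <= N'%:R by apply/ltW/truncnS_gt.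
have [F [Fs [oF oFs cov hnull [h [hc h0 hint]]]]] := hY N' isT.
exists (a @^-1` F), (fun j => a @^-1` Fs j); split.
- exact: open_comp.
- by move=> j; apply: open_comp.
- by move=> x; case: (cov (a x)) => [|[j]]; [left | right; exists j].
- move=> j; have [H [c [/continuous_onP Hc H0 H1]]] := hnull j.
  exists (fun x => path_concat (G x) (fun s => b (H (a x) s))), (b c); split.
  + exact/continuous_onP/continuous_family_follow.
  + by move=> x _; rewrite path_concat0 G0.
  + by move=> x hx; rewrite path_concat1 ?H1 // G1 H0.
have /continuous_onP hc' := hc.
exists (fun x => path_concat (G x) (fun s => b (h (a x) s))); split.
- exact/continuous_onP/continuous_family_follow.
- by move=> x _; rewrite path_concat0 G0.
move=> x hx; have pG := continuous_family_path hG (I : setT x).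
have ph := continuous_family_path hc' hx.
rewrite path_integral_concat //; last by rewrite G1 h0.
  have := hC0 x I; have := hC _ ph; have := hint (a x) hx.
  have := ler_norm (path_integral wX (G x)); rewrite /comp; lra.
exact: continuous_on_comp ph (continuous_continuous_on (A := setT) cb) (fun _ _ => I).
Qed.

End Transfer.

Section FiniteCW.
Variable R : realType.

Lemma finite_CW_cells (X : topologicalType) : finite_CW_complex R X ->
  exists k (dim : 'I_k -> nat) (Ph : forall i : 'I_k, 'rV[R]_(dim i) -> X),
    (forall i, continuous_on (@disk R (dim i)) (Ph i)) /\
    (forall x : X, exists i, (Ph i @` @odisk R (dim i)) x).
Proof.
move=> [k [dim [Ph [_ [[hc _ _] [hp _ _]]]]]]; exists k, dim, Ph; split.
  by move=> i; apply/continuous_onP.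
by move=> x; have [i [h _]] := hp x; exists i.
Qed.

Lemma finite_CW_compact (X : topologicalType) : finite_CW_complex R X ->
  compact (@setT X).
Proof. by move=> /finite_CW_cells [k [dim [Ph [hc hp]]]]; apply: cells_compact hp. Qed.

Lemma path_integral_comp_le (X Y : topologicalType) (wX : closed_form R X)
    (wY : closed_form R Y) (f : X -> Y) :
  finite_CW_complex R X -> continuous f ->
  (forall l, continuous_on (@unitI R) l -> l 0 = l 1 ->
     path_integral wY (f \o l) = path_integral wX l) ->
  exists C : R, forall g, continuous_on (@unitI R) g ->
     path_integral wY (f \o g) <= path_integral wX g + C.
Proof.
move=> /finite_CW_cells [k [dim [Ph [hc hp]]]] cf hloop.
have cfo g : continuous_on (@unitI R) g -> continuous_on (@unitI R) (f \o g).
  by move=> hg; apply: continuous_on_comp hg (continuous_continuous_on (A := setT) cf) (fun _ _ => I).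
pose J g := path_integral wY (f \o g) - path_integral wX g.
have J_concat al be : continuous_on (@unitI R) al -> continuous_on (@unitI R) be ->
    al 1 = be 0 -> J (path_concat al be) = J al + J be.
  move=> ha hb e; rewrite /J.
  have -> : f \o path_concat al be = path_concat (f \o al) (f \o be).
    by apply: funext => s; rewrite /comp /path_concat; case: ifP.
  have efe : (f \o al) 1 = (f \o be) 0 by rewrite /= e.
  have [hfa hfb] := (cfo _ ha, cfo _ hb).
  by rewrite !path_integral_concat //; ring.
have J_loop l : continuous_on (@unitI R) l -> l 0 = l 1 -> J l = 0.
  by move=> hl e; rewrite /J hloop // subrr.
have J_radial (i : 'I_k) :
    exists C : R, forall v, disk v -> `|J (radial_path Ph (i := i) v)| <= C.
  have hr := continuous_family_radial hc (i := i).
  have [M1 hM1] := path_integral_family_bounded wX (@disk_compact R (dim i)) hr.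
  have hfr : continuous_family (@disk R (dim i)) (fun v s => f (radial_path Ph v s)).
    exact: continuous_on_comp hr (continuous_continuous_on (A := setT) cf) (fun _ _ => I).
  have [M2 hM2] := path_integral_family_bounded wY (@disk_compact R (dim i)) hfr.
  exists (M2 + M1) => v dv; rewrite /J.
  by apply: le_trans (ler_normB _ _) _; apply: lerD (hM2 v dv) (hM1 v dv).
have [C hC] := defect_bounded hc hp J_concat J_loop J_radial.
by exists C => g /hC; rewrite /J; lra.
Qed.

End FiniteCW.

Lemma cat_xi_eq (R : realType) (X1 X2 : topologicalType) (w1 : closed_form R X1)
    (w2 : closed_form R X2) :
  (forall k, cat_cover_prop w1 k <-> cat_cover_prop w2 k) -> cat_xi w1 = cat_xi w2.
Proof.
move=> h; rewrite /cat_xi; congr xget; apply: funext => k; apply: propext.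
by split=> -[/h hk hmin]; split=> // m /h; apply: hmin.
Qed.

Unset Implicit Arguments.
Local Close Scope classical_set_scope.

Theorem mainTheorem4 (R : realType) (X1 X2 : topologicalType)
  (CW1 : finite_CW_complex R X1) (CW2 : finite_CW_complex R X2)
  (phi : X1 -> X2) (hphi : homotopy_equivalence R phi)
  (w1 : closed_form R X1) (w2 : closed_form R X2)
  (hpull : forall g : R -> X1, is_loop g ->
     path_integral w1 g = path_integral w2 (phi \o g)) :
  cat_xi w1 = cat_xi w2.
Proof.
have [cphi [psi [cpsi hpsiphi hphipsi]]] := hphi.
have loop_of (X : topologicalType) (l : R -> X) :
    continuous_on (@unitI R) l -> l 0 = l 1 -> is_loop l.
  by move=> hl e; split => //; apply/continuous_onP.
have periods_phi l : continuous_on (@unitI R) l -> l 0 = l 1 ->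
    path_integral w2 (phi \o l) = path_integral w1 l.
  by move=> hl e; rewrite hpull //; apply: loop_of.
have periods_psi l : continuous_on (@unitI R) l -> l 0 = l 1 ->
    path_integral w1 (psi \o l) = path_integral w2 l.
  move=> hl e; have hpl := continuous_on_comp hl (continuous_continuous_on (A := setT) cpsi).
  rewrite hpull; first exact: (path_integral_homotopic_loop w2 hphipsi).
  by apply: loop_of; [apply: hpl | rewrite /comp e].
have [G [hG G0 G1]] := homotopic_family hphipsi.
have [G' [hG' G0' G1']] := homotopic_family hpsiphi.
apply: cat_xi_eq => k; split.
  apply: (cat_cover_prop_transfer cpsi cphi hG G0 G1 (finite_CW_compact CW2)).
  exact: path_integral_comp_le CW1 cphi periods_phi.
apply: (cat_cover_prop_transfer cphi cpsi hG' G0' G1' (finite_CW_compact CW1)).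
exact: path_integral_comp_le CW2 cpsi periods_psi.
Qed.
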